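(* Let $\iota$ be a continuous involution of $G$, $H$ a pro-$p$ open compact subgroup of $G$ and $\chi$ a character of $H$. Suppose there is $w\in G$ with $\iota(H)=H^w$ and $\chi^{-1}\circ\iota=\chi^w$. Then for every $g\in G$, the character $\chi^g$ is trivial on $H^g\cap G^\iota$ if and only if $w\,\iota(g)\,g^{-1}$ intertwines $\chi$.
   Context: $F$ is a non-archimedean locally compact field of odd residue characteristic $p$, $A$ a central simple $F$-algebra and $G=A^\times$. $G^\iota$ is the fixed-point subgroup of $\iota$. For $g\in G$: $H^g=g^{-1}Hg$ and $\chi^g(x)=\chi(gxg^{-1})$ for $x\in H^g$. An element $\gamma\in G$ intertwines $\chi$ if $\chi(h)=\chi^\gamma(h)$ for all $h\in H\cap H^\gamma$. *)

From HB Require Import structures.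
From mathcomp Require Import all_boot all_order all_algebra.
From mathcomp Require Import falgebra reals.
From mathcomp.real_closed Require Import complex.
From Stdlib Require List.

Set Implicit Arguments.
Unset Strict Implicit.
Unset Printing Implicit Defensive.

Import Order.TTheory GRing.Theory Num.Theory.
Local Open Scope ring_scope.

Definition dopen {R : realType} {T : Type} (d : T -> T -> R) (U : T -> Prop) :=
  forall x, U x -> exists2 e : R, 0 < e & forall y, d x y < e -> U y.

Definition dcompact {R : realType} {T : Type} (d : T -> T -> R) (K : T -> Prop) :=
  forall (I : Type) (U : I -> T -> Prop),
    (forall i, dopen d (U i)) -> (forall x, K x -> exists i, U i x) ->
    exists s : list I, forall x, K x -> exists i, List.In i s /\ U i x.

(* abs is a non-archimedean, non-trivial absolute value on F whose metric
   topology is locally compact (some closed ball around 0 of positive radius is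
   compact), and the residue characteristic is p (i.e. |p| < 1). *)
Definition nonarch_local_field {R : realType} (F : fieldType) (abs : F -> R)
    (p : nat) :=
  [/\ (forall x, abs x = 0 <-> x = 0) /\ (forall x, 0 <= abs x),
      (forall x y, abs (x * y) = abs x * abs y) /\
      (forall x y, abs (x + y) <= Num.max (abs x) (abs y)),
      (exists x, abs x != 0 /\ abs x != 1),
      (exists2 r : R, 0 < r &
        dcompact (fun x y => abs (x - y)) (fun x => abs x <= r))
    & abs (p%:R : F) < 1].

Definition central_simple (F : fieldType) (A : falgType F) :=
  (forall a : A, (forall b : A, a * b = b * a) -> exists c : F, a = c%:A) /\
  (forall I : {vspace A},
      (forall a x : A, x \in I -> (a * x \in I) /\ (x * a \in I)) ->
      I = 0%VS \/ I = fullv).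

(* The natural (product) metric on A, via coordinates in a fixed F-basis. *)
Definition alg_dist {R : realType} (F : fieldType) (abs : F -> R)
    (A : falgType F) (a b : A) : R :=
  \big[Num.max/0]_(i < \dim (fullv : {vspace A}))
     abs (coord (vbasis fullv) i (a - b)).

Section GroupNotions.
Variables (R : realType) (F : fieldType) (abs : F -> R) (A : falgType F).
Local Notation d := (alg_dist abs (A := A)).
Local Notation inG x := (x \is a GRing.unit).

Definition is_subgroup (H : A -> Prop) :=
  [/\ forall x, H x -> inG x, H 1,
      forall x y, H x -> H y -> H (x * y)
    & forall x, H x -> H x^-1].

Definition open_in_G (H : A -> Prop) :=
  (forall x, H x -> inG x) /\
  forall x, H x -> exists2 e : R, 0 < e &
    forall y, inG y -> d x y < e -> H y.

Definition normal_in (N H : A -> Prop) :=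
  forall h x, H h -> N x -> N (h * x * h^-1).

Definition has_index (H N : A -> Prop) (n : nat) :=
  exists s : seq A, [/\ size s = n, forall x, x \in s -> H x,
    forall h, H h -> exists2 x, x \in s & N (x^-1 * h)
  & forall i j, (i < n)%N -> (j < n)%N ->
      N ((nth 0 s i)^-1 * nth 0 s j) -> i = j].

Definition prop_compact_open (p : nat) (H : A -> Prop) :=
  [/\ is_subgroup H, open_in_G H, dcompact d H
    & forall N, is_subgroup N -> (forall x, N x -> H x) -> normal_in N H ->
        open_in_G N -> exists k, has_index H N (p ^ k)].

Definition cont_involution (iota : A -> A) :=
  [/\ forall x, inG x -> inG (iota x),
      forall x y, inG x -> inG y -> iota (x * y) = iota x * iota y,
      forall x, inG x -> iota (iota x) = x
    & forall x, inG x -> forall e : R, 0 < e -> exists2 e' : R, 0 < e' &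
        forall y, inG y -> d x y < e' -> d (iota x) (iota y) < e].

Definition character (H : A -> Prop) (chi : A -> complex R) :=
  [/\ forall x, H x -> chi x != 0,
      forall x y, H x -> H y -> chi (x * y) = chi x * chi y
    & forall x, H x -> forall e : R, 0 < e -> exists2 e' : R, 0 < e' &
        forall y, H y -> d x y < e' -> `|chi y - chi x| < (e%:C)%C].

End GroupNotions.

(* H^g = g^-1 H g *)
Definition conjset (F : fieldType) (A : falgType F) (H : A -> Prop) (g : A) :
  A -> Prop := fun x => H (g * x * g^-1).

Definition conjchar (F : fieldType) (A : falgType F) (C : Type) (chi : A -> C)
  (g : A) : A -> C := fun x => chi (g * x * g^-1).

Definition intertwines (F : fieldType) (A : falgType F) (C : Type)
    (H : A -> Prop) (chi : A -> C) (gamma : A) :=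
  forall h, H h -> conjset H gamma h -> chi h = conjchar chi gamma h.

From HB Require Import structures.
From mathcomp Require Import all_boot all_order all_algebra all_fingroup.
From mathcomp Require Import falgebra reals archimedean.
From mathcomp.real_closed Require Import complex.
From mathcomp Require Import ring lra.
From Stdlib Require Import ClassicalEpsilon Classical.

Set Implicit Arguments.
Unset Strict Implicit.
Unset Printing Implicit Defensive.

Import Order.TTheory GRing.Theory Num.Theory.
Local Open Scope ring_scope.

(* Let tau y = g iota(g^-1 y g) g^-1 (a continuous involutive automorphism of G) and
   theta h = chi h * chi (tau h) for h in H ∩ tau^-1(H).  Unfolding the definitions,
   condition (a) says that chi is trivial on the tau-fixed points of H
   (conj_fixed_iff) and, using iota(H) = H^w and chi^-1 o iota = chi^w, condition (b)
   says that theta is trivial on H ∩ tau^-1(H) (intertwines_iff).  At a fixed point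
   theta = chi^2, and chi has odd order since H is pro-p with p odd: this gives
   (b) => (a).  For (a) => (b) (theta_trivial): s = h tau(h)^-1 satisfies
   tau s = s^-1, so s^(-1/2) h would be a fixed point in the level set of theta h;
   as s has odd powers arbitrarily close to 1, that level set contains points moved
   arbitrarily little by tau, whereas compactness of H bounds the displacement below
   on any level set without fixed points. *)

Section ComplexUnit.
Variable R : realType.
Local Notation C := (complex R).

Definition cnorm (z : C) : R := complex.Re `|z|.

Lemma cnormE (z : C) : `|z| = (cnorm z)%:C%C.
Proof. by rewrite /cnorm normc_def. Qed.

Lemma cnorm_ge0 (z : C) : 0 <= cnorm z.
Proof. by rewrite -ler0c -cnormE. Qed.

Lemma cnormM (x y : C) : cnorm (x * y) = cnorm x * cnorm y.
Proof. by apply: complexI; rewrite rmorphM /= -!cnormE normrM. Qed.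

Lemma cnormD (x y : C) : cnorm (x + y) <= cnorm x + cnorm y.
Proof. by rewrite -lecR rmorphD /= -!cnormE ler_normD. Qed.

Lemma cnormN (x : C) : cnorm (- x) = cnorm x.
Proof. by rewrite /cnorm normrN. Qed.

Lemma cnorm_eq0 (x : C) : cnorm x = 0 -> x = 0.
Proof. by move=> h; apply/eqP; rewrite -normr_eq0 cnormE h. Qed.

Lemma cnorm_lt (x : C) (e : R) : (`|x| < e%:C%C) = (cnorm x < e).
Proof. by rewrite cnormE ltcR. Qed.

Lemma cnorm_nat n : cnorm n%:R = n%:R.
Proof. by apply: complexI; rewrite -cnormE normr_nat rmorph_nat. Qed.

(* If all iterated squares of c stay within 1/2 of 1, then c = 1: squaring
   multiplies the distance to 1 by at least 3/2, so it would grow unboundedly.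
   This is why a continuous character is trivial near 1. *)
Lemma eq1_of_squares_near1 (c : C) :
  (forall k, cnorm (c ^+ (2 ^ k) - 1) < 1/2) -> c = 1.
Proof.
move=> near; set t := fun k => cnorm (c ^+ (2 ^ k) - 1).
have grow k : 3/2 * t k <= t k.+1.
  rewrite /t expnS mulnC exprM expr2.
  set u := c ^+ (2 ^ k) - 1.
  have -> : c ^+ (2 ^ k) * c ^+ (2 ^ k) - 1 = u * (u + 2%:R) by rewrite /u; ring.
  rewrite cnormM mulrC; apply: ler_wpM2l; first exact: cnorm_ge0.
  have := cnormD (u + 2%:R) (- u); rewrite addrC addKr cnormN cnorm_nat.
  by have := near k; rewrite /t -/u; lra.
have linear k : t 0%N + k%:R * t 0%N / 2 <= t k.
  elim: k => [|k ih]; first by rewrite mul0r mul0r addr0.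
  have := grow k; have := cnorm_ge0 (c ^+ (2 ^ 0) - 1); rewrite -/(t 0%N) -natr1.
  have : 0 <= k%:R * t 0%N by rewrite mulr_ge0 // cnorm_ge0.
  lra.
have t0 : t 0%N = 0.
  apply/eqP; rewrite eq_le cnorm_ge0 andbT leNgt; apply/negP => t0_gt0.
  have inv_gt0 : 0 < (t 0%N)^-1 by rewrite invr_gt0.
  have := archi_boundP (ltW inv_gt0); set m := Num.bound _ => hm.
  have : 1 < m%:R * t 0%N by rewrite -ltr_pdivrMr // mul1r.
  by have := linear m; have := near m; rewrite -/(t m); lra.
by apply/eqP; rewrite -subr_eq0; apply/eqP/cnorm_eq0; rewrite -t0 /t expn0 expr1.
Qed.

End ComplexUnit.

Section FreePermutation.
Local Open Scope group_scope.
Variables (T : finType) (sigma : {perm T}).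

(* A permutation all of whose powers are either the identity or fixed-point
   free has all its orbits of size #[sigma], hence #[sigma] divides #|T|. *)
Lemma order_dvd_card_of_semiregular :
  (forall m x, (sigma ^+ m) x = x -> sigma ^+ m = 1) -> (#[sigma] %| #|T|)%N.
Proof.
move=> semireg.
have orbit_size x : #|orbit 'P <[sigma]> x| = #[sigma].
  have := card_orbit_stab 'P <[sigma]> x.
  suff -> : #|'C_<[sigma]>[x | 'P]| = 1%N by rewrite muln1.
  rewrite -(cards1 (1 : {perm T})); apply: eq_card => t; rewrite !inE.
  apply/idP/idP => [/andP [/cycleP [m ->]] fix_x|/eqP ->].
    apply/eqP; apply: (semireg m x).
    by move: fix_x => /andP [_ /subsetP /(_ x (set11 x))]; rewrite inE /= apermE => /eqP.
  by rewrite group1 /=; apply/subsetP => y _; rewrite inE /= apermE perm1.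
have := acts_sum_card_orbit (to := 'P) (G := <[sigma]>) (S := [set: T]).
rewrite cardsT => <-; last by apply/actsP => t _ x; rewrite !inE.
by apply: dvdn_sum => X /imsetP [x _ ->]; rewrite orbit_size.
Qed.

End FreePermutation.

Section CosetPermutation.
Variables (F : fieldType) (A : falgType F) (H N : A -> Prop) (n : nat).
Hypotheses (subH : is_subgroup H) (subN : is_subgroup N) (N_normal : normal_in N H).
Variable reps : seq A.
Hypotheses (reps_size : size reps = n) (reps_H : forall x, x \in reps -> H x)
  (reps_cover : forall h, H h -> exists2 x, x \in reps & N (x^-1 * h))
  (reps_distinct : forall i j, (i < n)%N -> (j < n)%N ->
     N ((nth 0 reps i)^-1 * nth 0 reps j) -> i = j).
Variable s : A.
Hypothesis H_s : H s.

Definition rep (i : 'I_n) : A := nth 0 reps i.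

Lemma rep_H i : H (rep i).
Proof. by apply: reps_H; rewrite mem_nth // reps_size. Qed.

Lemma rep_unit i : rep i \is a GRing.unit.
Proof. by case: subH => unit_H _ _ _; exact: unit_H _ (rep_H i). Qed.

Lemma rep_inj i j : N ((rep i)^-1 * rep j) -> i = j.
Proof. by move=> Nij; apply: val_inj; apply: reps_distinct; rewrite ?ltn_ord. Qed.

Lemma exists_next (i : 'I_n) : exists j : 'I_n, N ((rep j)^-1 * (rep i * s)).
Proof.
case: subH => _ _ mul_H _.
have [x x_in Nx] := reps_cover (mul_H _ _ (rep_H i) H_s).
have lt : (index x reps < n)%N by rewrite -reps_size index_mem.
by exists (Ordinal lt); rewrite /rep /= nth_index.
Qed.

Definition next (i : 'I_n) : 'I_n :=
  proj1_sig (constructive_indefinite_description _ (exists_next i)).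

Lemma nextP i : N ((rep (next i))^-1 * (rep i * s)).
Proof. by rewrite /next; case: constructive_indefinite_description. Qed.

Lemma next_inj : injective next.
Proof.
case: subH => unit_H _ _ inv_H; case: subN => _ _ mul_N inv_N.
move=> i j eq_ij; apply: rep_inj.
have Nij := mul_N _ _ (inv_N _ (nextP i)) (nextP j); rewrite eq_ij in Nij.
have us := unit_H _ H_s.
have uis : rep i * s \is a GRing.unit by rewrite unitrMl // rep_unit.
rewrite invrM ?unitrV ?rep_unit // in Nij.
rewrite invrK -mulrA mulVKr ?rep_unit // in Nij.
have := N_normal H_s Nij.
by rewrite invrM ?rep_unit // !mulrA mulrK // divrr // mul1r.
Qed.

Definition coset_perm : {perm 'I_n} := perm next_inj.

Lemma coset_perm_pow m i :
  N ((rep ((coset_perm ^+ m)%g i))^-1 * (rep i * s ^+ m)).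
Proof.
case: subH => unit_H _ _ inv_H; case: subN => _ one_N mul_N _.
elim: m => [|m ih]; first by rewrite expg0 perm1 expr0 mulr1 mulVr ?rep_unit.
rewrite expgSr permM permE exprSr; set j := (coset_perm ^+ m)%g i in ih *.
have conj_ih : N (s^-1 * ((rep j)^-1 * (rep i * s ^+ m)) * s).
  by have := N_normal (inv_H _ H_s) ih; rewrite invrK.
have := mul_N _ _ (nextP j) conj_ih.
by rewrite !mulrA (mulrK (unit_H _ H_s)) (mulrK (rep_unit j)).
Qed.

Lemma coset_perm_semiregular m i :
  (coset_perm ^+ m)%g i = i -> (coset_perm ^+ m = 1)%g.
Proof.
case: subN => _ _ mul_N inv_N.
move=> fix_i; have Ni := coset_perm_pow m i.
rewrite fix_i mulKr ?rep_unit // in Ni.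
apply/permP => j; rewrite perm1; apply: rep_inj.
have := mul_N _ _ (coset_perm_pow m j) (inv_N _ Ni).
case: subH => unit_H _ _ _.
by rewrite -!mulrA divrr ?unitrX ?unit_H // mulr1.
Qed.

Lemma power_in_normal_subgroup : exists M, [/\ (0 < M)%N, (M %| n)%N & N (s ^+ M)].
Proof.
case: subH => _ one_H _ _.
have n_gt0 : (0 < n)%N.
  by have [x x_in _] := reps_cover one_H; rewrite -reps_size; case: (reps) x_in.
exists #[coset_perm]%g; split; first exact: order_gt0.
  by have := order_dvd_card_of_semiregular coset_perm_semiregular; rewrite card_ord.
have := coset_perm_pow #[coset_perm]%g (Ordinal n_gt0).
by rewrite expg_order perm1 mulKr // rep_unit.
Qed.

End CosetPermutation.

Lemma odd_power_in_normal_subgroup (F : fieldType) (A : falgType F)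
    (H N : A -> Prop) (p k : nat) (s : A) :
  odd p -> is_subgroup H -> is_subgroup N -> normal_in N H ->
  has_index H N (p ^ k) -> H s ->
  exists M, odd M /\ N (s ^+ M).
Proof.
move=> odd_p subH subN nN [reps [sz repsH cover distinct]] Hs.
have [M [_ M_dvd NM]] := power_in_normal_subgroup subH subN nN sz repsH cover distinct Hs.
exists M; split=> //; move: M_dvd => /dvdnP [q eq_pk].
have : odd (p ^ k) by rewrite oddX odd_p orbT.
by rewrite eq_pk oddM => /andP [].
Qed.

Lemma mul_lt_of_lt_div (R : realFieldType) (c t r : R) :
  0 <= c -> 0 <= t -> t < r / (c + 1) -> c * t < r.
Proof.
move=> c0 t0 lt_t; have c1 : 0 < c + 1 by lra.
by rewrite ltr_pdivlMr // mulrDr mulr1 mulrC in lt_t; lra.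
Qed.

Lemma seq_pos_lower_bound (R : realFieldType) (T : eqType) (L : seq T) (f : T -> R) :
  (forall x, x \in L -> 0 < f x) -> exists2 del : R, 0 < del & forall x, x \in L -> del <= f x.
Proof.
elim: L => [|a L ih] pos; first by exists 1.
have [|del del0 le_del] := ih; first by move=> x xL; apply: pos; rewrite inE xL orbT.
have fa0 := pos a (mem_head a L).
exists (Num.min del (f a)); first by rewrite lt_min del0.
move=> x; rewrite inE => /orP [/eqP ->|xL]; first by rewrite ge_min lexx orbT.
by rewrite ge_min le_del.
Qed.

Lemma In_mem (T : eqType) (x : T) (L : seq T) : List.In x L -> x \in L.
Proof. by elim: L => [|a L ih] //= [->|/ih]; rewrite inE ?eqxx // orbC => ->. Qed.

Section UltrametricNorm.
Variables (R : realType) (F : fieldType) (abs : F -> R) (A : falgType F).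
Hypotheses (abs_eq0 : forall x, abs x = 0 <-> x = 0) (abs_ge0 : forall x, 0 <= abs x)
  (absM : forall x y, abs (x * y) = abs x * abs y)
  (abs_ultra : forall x y, abs (x + y) <= Num.max (abs x) (abs y)).

Local Notation d := (alg_dist abs (A := A)).

Definition Nm (a : A) : R := \big[Num.max/0]_(i < \dim (fullv : {vspace A}))
  abs (coord (vbasis fullv) i a).

Lemma alg_distE a b : alg_dist abs a b = Nm (a - b). Proof. by []. Qed.

Lemma abs0 : abs 0 = 0. Proof. exact/abs_eq0. Qed.

Lemma abs1 : abs 1 = 1.
Proof.
have nz : abs 1 != 0 by apply/eqP => /abs_eq0 /eqP; rewrite oner_eq0.
by apply: (mulfI nz); rewrite mulr1 -absM mulr1.
Qed.

Lemma absN x : abs (- x) = abs x.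
Proof.
suff absN1 : abs (-1) = 1 by rewrite -mulN1r absM absN1 mul1r.
have := absM (-1) (-1); rewrite mulrNN mulr1 abs1 => /esym/eqP.
rewrite -expr2 sqrf_eq1 => /orP [/eqP //|/eqP absN1].
by have := abs_ge0 (-1); rewrite absN1 ler0N1.
Qed.

Lemma abs_sum (I : Type) (r : seq I) (P : pred I) (G : I -> F) :
  abs (\sum_(i <- r | P i) G i) <= \big[Num.max/0]_(i <- r | P i) abs (G i).
Proof.
elim/big_rec2: _ => [|i y z _ le_z]; first by rewrite abs0.
by apply: le_trans (abs_ultra _ _) _; rewrite ge_max !le_max lexx le_z orbT.
Qed.

Lemma Nm_ge0 a : 0 <= Nm a. Proof. exact: bigmax_ge_id. Qed.

Lemma coord_le_Nm a i : abs (coord (vbasis fullv) i a) <= Nm a.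
Proof. exact: le_bigmax. Qed.

Lemma Nm_le a c : 0 <= c -> (forall i, abs (coord (vbasis fullv) i a) <= c) -> Nm a <= c.
Proof. by move=> c0 le_c; apply: bigmax_le. Qed.

Lemma Nm_ultra a b : Nm (a + b) <= Num.max (Nm a) (Nm b).
Proof.
apply: Nm_le => [|i]; first by rewrite le_max Nm_ge0.
rewrite linearD /=; apply: le_trans (abs_ultra _ _) _.
by rewrite ge_max !le_max !coord_le_Nm /= orbT.
Qed.

Lemma NmN a : Nm (- a) = Nm a.
Proof. by apply: eq_bigr => i _; rewrite linearN /= absN. Qed.

Lemma NmB a b : Nm (a - b) = Nm (b - a).
Proof. by rewrite -NmN opprB. Qed.

Lemma Nm0 : Nm 0 = 0.
Proof. by apply/eqP; rewrite eq_le Nm_ge0 andbT; apply: Nm_le => // i; rewrite linear0 abs0. Qed.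

Lemma Nm_eq0 a : Nm a = 0 -> a = 0.
Proof.
move=> Na0; rewrite (coord_vbasis (memvf a)); apply: big1 => i _.
have : abs (coord (vbasis fullv) i a) = 0.
  by apply/eqP; rewrite eq_le abs_ge0 andbT -Na0 coord_le_Nm.
by move/abs_eq0 ->; rewrite scale0r.
Qed.

Lemma Nm_gt0 a : a != 0 -> 0 < Nm a.
Proof. by move=> nz; rewrite lt_def Nm_ge0 andbT; apply: contra nz => /eqP/Nm_eq0 ->. Qed.

Lemma NmD_lt a b c : Nm a < c -> Nm b < c -> Nm (a + b) < c.
Proof. by move=> lt_a lt_b; apply: le_lt_trans (Nm_ultra _ _) _; rewrite gt_max lt_a lt_b. Qed.

Lemma NmD_eq a b : Nm b < Nm a -> Nm (a + b) = Nm a.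
Proof.
move=> lt_ba; apply/eqP; rewrite eq_le; apply/andP; split.
  by apply: le_trans (Nm_ultra _ _) _; rewrite ge_max lexx ltW.
have := Nm_ultra (a + b) (- b); rewrite addrK NmN.
by rewrite le_max => /orP [//|]; rewrite leNgt lt_ba.
Qed.

Lemma ball_open (x : A) (e : R) : dopen d (fun y => Nm (x - y) < e).
Proof.
move=> y lt_xy; exists (e - Nm (x - y)); first by rewrite subr_gt0.
move=> z; rewrite alg_distE => lt_yz.
have -> : x - z = (x - y) + (y - z) by rewrite addrA subrK.
apply: le_lt_trans (Nm_ultra _ _) _; rewrite gt_max lt_xy /=.
by apply: lt_le_trans lt_yz _; rewrite lerBlDr lerDl Nm_ge0.
Qed.

(* A bound on the structure constants of the algebra, so Nm (a b) <= Cst Nm a Nm b. *)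
Definition Cst : R := \big[Num.max/0]_(i < \dim (fullv : {vspace A}))
  \big[Num.max/0]_(j < \dim (fullv : {vspace A}))
  Nm ((vbasis fullv)`_i * (vbasis fullv)`_j).

Lemma Cst_ge0 : 0 <= Cst. Proof. exact: bigmax_ge_id. Qed.

Lemma NmM a b : Nm (a * b) <= Cst * (Nm a * Nm b).
Proof.
have bound_ge0 : 0 <= Cst * (Nm a * Nm b) by rewrite !mulr_ge0 ?Nm_ge0 ?Cst_ge0.
have ea := coord_vbasis (memvf a); have eb := coord_vbasis (memvf b).
rewrite {1}ea {1}eb mulr_suml; under eq_bigr do rewrite mulr_sumr.
apply: Nm_le => // k; rewrite !linear_sum /=.
apply: le_trans (abs_sum _ _ _) _; apply: bigmax_le => // i _.
rewrite linear_sum /=; apply: le_trans (abs_sum _ _ _) _; apply: bigmax_le => // j _.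
rewrite -scalerAl -scalerAr !linearZ /= !absM.
set ca := abs (coord _ i a); set cb := abs (coord _ j b).
set cij := abs (coord _ k _).
have le_cij : cij <= Cst.
  apply: le_trans (coord_le_Nm _ _) _.
  by apply: le_trans (le_bigmax _ _ i); exact: (le_bigmax _ _ j).
rewrite mulrA mulrC; apply: ler_pM; rewrite ?mulr_ge0 ?abs_ge0 //.
by apply: ler_pM; rewrite ?abs_ge0 ?coord_le_Nm.
Qed.

Lemma NmM3 a b x : Nm (a * x * b) <= Cst * Nm a * (Cst * Nm b) * Nm x.
Proof.
have c0 := Cst_ge0; have b0 := Nm_ge0 b.
apply: le_trans (NmM _ _) _.
apply: (@le_trans _ _ (Cst * (Cst * (Nm a * Nm x) * Nm b))).
  by apply: (ler_wpM2l c0); apply: (ler_wpM2r b0); exact: NmM.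
by rewrite le_eqVlt; apply/orP; left; apply/eqP; ring.
Qed.

(* Radii below 1/Cst make the ball around 1 stable under products. *)
Lemma small_radius (r : R) : 0 < r -> exists2 rho : R, 0 < rho /\ rho <= r & Cst * rho <= 1.
Proof.
move=> r0; have c0 := Cst_ge0.
exists (Num.min r (Cst + 1)^-1); first by rewrite lt_min r0 invr_gt0 ge_min lexx; lra.
apply: (@le_trans _ _ (Cst * (Cst + 1)^-1)); last by rewrite ler_pdivrMr; lra.
by apply: ler_wpM2l => //; rewrite ge_min lexx orbT.
Qed.

Lemma ball1_mul (rho : R) a b : 0 < rho -> Cst * rho <= 1 ->
  Nm (a - 1) < rho -> Nm (b - 1) < rho -> Nm (a * b - 1) < rho.
Proof.
move=> rho0 c_rho lt_a lt_b.
have -> : a * b - 1 = (a - 1) * (b - 1) + ((a - 1) + (b - 1)).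
  rewrite -[a in LHS](subrK 1 a) -[b in LHS](subrK 1 b).
  by rewrite mulrDl !mulrDr !mul1r mulr1 !addrA addrK.
apply: NmD_lt; last exact: NmD_lt.
apply: le_lt_trans (NmM _ _) _; rewrite mulrA.
apply: (@le_lt_trans _ _ (Cst * rho * Nm (b - 1))); last first.
  by apply: le_lt_trans lt_b; rewrite -[leRHS]mul1r ler_wpM2r ?Nm_ge0.
by rewrite ler_wpM2r ?Nm_ge0 // ler_wpM2l ?Cst_ge0 // ltW.
Qed.

Lemma compact_ball_cover (K : A -> Prop) (rad : A -> R) :
  dcompact d K -> (forall x, K x -> 0 < rad x) ->
  exists L : seq A, forall y, K y -> exists x, [/\ x \in L, K x & Nm (x - y) < rad x].
Proof.
move=> compK rad_gt0.
have [|y Ky|L cover] := compK A (fun x y => K x /\ Nm (x - y) < rad x).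
- move=> x y [Kx lt_xy]; have [e e0 ball_e] := ball_open lt_xy.
  by exists e => // z /ball_e; split.
- by exists y; split=> //; rewrite subrr Nm0 rad_gt0.
exists L => y Ky; have [x [xL [Kx lt_xy]]] := cover y Ky.
by exists x; split=> //; apply: In_mem.
Qed.

Lemma compact_bounded (K : A -> Prop) :
  dcompact d K -> exists Bd : R, forall x, K x -> Nm x <= Bd.
Proof.
move=> compK; have [L cover] := compact_ball_cover (rad := fun _ => 1) compK (fun _ _ => ltr01).
exists (1 + \big[Num.max/0]_(x <- L) Nm x) => y Ky.
have [x [xL _ lt_xy]] := cover y Ky.
have -> : y = x - (x - y) by rewrite opprB addrC subrK.
apply: le_trans (Nm_ultra _ _) _; rewrite NmN ge_max.
have le_x : Nm x <= \big[Num.max/0]_(x <- L) Nm x by exact: le_bigmax_seq.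
have : 0 <= \big[Num.max/0]_(x <- L) Nm x by exact: bigmax_ge_id.
by move=> max_ge0; apply/andP; split; lra.
Qed.

Lemma compact_lower_bound (K P : A -> Prop) (f : A -> R) :
  dcompact d K ->
  (forall x, K x -> exists e : R, exists del : R, [/\ 0 < e, 0 < del &
     forall y, K y -> P y -> Nm (x - y) < e -> del <= f y]) ->
  exists2 del : R, 0 < del & forall y, K y -> P y -> del <= f y.
Proof.
move=> compK local.
have local' x : exists ed : R * R, [/\ 0 < ed.1, 0 < ed.2 &
    K x -> forall y, K y -> P y -> Nm (x - y) < ed.1 -> ed.2 <= f y].
  case: (classic (K x)) => [Kx|nKx]; last by exists (1, 1).
  by have [e [del [e0 del0 le_del]]] := local x Kx; exists (e, del).
pose ed x := proj1_sig (constructive_indefinite_description _ (local' x)).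
have edP x : [/\ 0 < (ed x).1, 0 < (ed x).2 &
    K x -> forall y, K y -> P y -> Nm (x - y) < (ed x).1 -> (ed x).2 <= f y].
  by rewrite /ed; case: constructive_indefinite_description.
have rad_gt0 x : 0 < (ed x).1 by case: (edP x).
have del_gt0 x : 0 < (ed x).2 by case: (edP x).
have [L cover] := compact_ball_cover (rad := fun x => (ed x).1) compK (fun x _ => rad_gt0 x).
have [del del0 le_del] := seq_pos_lower_bound (L := L) (fun x _ => del_gt0 x).
exists del => // y Ky Py; have [x [xL Kx lt_xy]] := cover y Ky.
by apply: le_trans (le_del x xL) _; case: (edP x) => _ _; apply.
Qed.

Section CompactOpenCharacter.
Variables (p : nat) (H : A -> Prop) (chi : A -> complex R).
Hypotheses (odd_p : odd p) (H_prop : prop_compact_open abs p H)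
  (chi_char : character abs H chi).

Local Notation unit x := (x \is a GRing.unit).

Lemma H_subgroup : is_subgroup H. Proof. by case: H_prop. Qed.
Lemma H_unit x : H x -> unit x. Proof. by case: H_subgroup => unit_H *; apply: unit_H. Qed.
Lemma H1 : H 1. Proof. by case: H_subgroup. Qed.
Lemma HM x y : H x -> H y -> H (x * y). Proof. by case: H_subgroup => _ _ mul_H _; apply: mul_H. Qed.
Lemma HV x : H x -> H x^-1. Proof. by case: H_subgroup => _ _ _ inv_H; apply: inv_H. Qed.

Lemma HX x n : H x -> H (x ^+ n).
Proof. by move=> Hx; elim: n => [|n ih]; [rewrite expr0; exact: H1|rewrite exprS; exact: HM]. Qed.

Lemma H_open : open_in_G abs H. Proof. by case: H_prop. Qed.
Lemma H_compact : dcompact d H. Proof. by case: H_prop. Qed.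

Lemma chiM x y : H x -> H y -> chi (x * y) = chi x * chi y.
Proof. by case: chi_char => _ chi_mul _; apply: chi_mul. Qed.

Lemma chi_neq0 x : H x -> chi x != 0. Proof. by case: chi_char => chi_nz _ _; apply: chi_nz. Qed.

Lemma chi1 : chi 1 = 1.
Proof. by apply: (mulfI (chi_neq0 H1)); rewrite -(chiM H1 H1) !mulr1. Qed.

Lemma chiV x : H x -> chi x^-1 = (chi x)^-1.
Proof.
move=> Hx; apply: (mulfI (chi_neq0 Hx)).
by rewrite -(chiM Hx (HV Hx)) mulrV ?H_unit // mulfV ?chi_neq0 // chi1.
Qed.

Lemma chiX x n : H x -> chi (x ^+ n) = chi x ^+ n.
Proof.
move=> Hx; elim: n => [|n ih]; first by rewrite !expr0 chi1.
by rewrite !exprS (chiM Hx (HX n Hx)) ih.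
Qed.

Lemma odd_power_in_open_normal (N : A -> Prop) s :
  is_subgroup N -> (forall x, N x -> H x) -> normal_in N H -> open_in_G abs N ->
  H s -> exists M, odd M /\ N (s ^+ M).
Proof.
move=> subN NH nN openN Hs; case: H_prop => _ _ _ /(_ N subN NH nN openN) [k idx].
exact: odd_power_in_normal_subgroup odd_p H_subgroup subN nN idx Hs.
Qed.

(* H is bounded (being compact), so multiplication by elements of H is Lipschitz. *)
Definition Bd : R := proj1_sig (constructive_indefinite_description _ (compact_bounded H_compact)).

Lemma Bd_bound x : H x -> Nm x <= Bd.
Proof. by rewrite /Bd; case: constructive_indefinite_description => B; apply. Qed.

Definition LH : R := Cst * Bd.

Lemma LH_ge0 : 0 <= LH.
Proof. by rewrite mulr_ge0 ?Cst_ge0 // (le_trans (Nm_ge0 1) (Bd_bound H1)). Qed.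

Lemma NmHl a x : H a -> Nm (a * x) <= LH * Nm x.
Proof.
move=> Ha; apply: le_trans (NmM _ _) _; rewrite -mulrA ler_wpM2l ?Cst_ge0 //.
by rewrite ler_wpM2r ?Nm_ge0 ?Bd_bound.
Qed.

Lemma NmHr a x : H a -> Nm (x * a) <= LH * Nm x.
Proof.
move=> Ha; apply: le_trans (NmM _ _) _; rewrite -mulrA ler_wpM2l ?Cst_ge0 //.
by rewrite mulrC ler_wpM2r ?Nm_ge0 ?Bd_bound.
Qed.

Lemma NmHlr a b x : H a -> H b -> Nm (a * x * b) <= LH * LH * Nm x.
Proof.
move=> Ha Hb; apply: le_trans (NmHr _ Hb) _; rewrite -mulrA.
by apply: ler_wpM2l; [exact: LH_ge0|exact: NmHl].
Qed.

(* A continuous character is trivial near 1: the ball of radius rho < 1/Cst around 1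
   is stable under products, and chi maps it near 1, so eq1_of_squares_near1 applies. *)
Lemma chi_trivial_near1 :
  exists2 r0 : R, 0 < r0 & forall y, H y -> Nm (y - 1) < r0 -> chi y = 1.
Proof.
case: chi_char => _ _ /(_ 1 H1 (1/2)) [|e e0 cont_e]; first by lra.
have [rho [rho0 rho_e] c_rho] := small_radius e0.
exists rho => // y Hy near_y.
have pow_near m : Nm (y ^+ m.+1 - 1) < rho.
  by elim: m => [|m ih]; rewrite ?expr1 // exprS ball1_mul.
apply: eq1_of_squares_near1 => k.
have := cont_e (y ^+ (2 ^ k)) (HX _ Hy); rewrite alg_distE chi1 chiX // cnorm_lt.
apply; rewrite NmB; have : (0 < 2 ^ k)%N by rewrite expn_gt0.
by case: (2 ^ k)%N => // m _; apply: lt_le_trans rho_e; exact: pow_near.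
Qed.

Lemma chi_locally_constant x : H x -> exists2 e : R, 0 < e &
  forall y, unit y -> Nm (x - y) < e -> H y /\ chi y = chi x.
Proof.
move=> Hx; have [r0 r00 triv] := chi_trivial_near1.
have [_ /(_ x Hx) [e1 e10 open_e1]] := H_open.
have LH1 : 0 < LH + 1 by have := LH_ge0; lra.
exists (Num.min e1 (r0 / (LH + 1))); first by rewrite lt_min e10 divr_gt0.
move=> y uy; rewrite lt_min => /andP [lt_e1 lt_r0].
have Hy : H y by apply: open_e1; rewrite // alg_distE.
have Hxy : H (x^-1 * y) by apply: HM (HV Hx) Hy.
have chi_xy : chi (x^-1 * y) = 1.
  apply: triv => //; rewrite -[X in _ - X](mulVr (H_unit Hx)) -mulrBr.
  apply: le_lt_trans (NmHl _ (HV Hx)) _.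
  by apply: mul_lt_of_lt_div; rewrite ?LH_ge0 ?Nm_ge0 // NmB.
by split=> //; rewrite -[y](mulVKr (H_unit Hx)) chiM // chi_xy mulr1.
Qed.

Definition Ker y := H y /\ chi y = 1.

Lemma Ker_subgroup : is_subgroup Ker.
Proof.
split=> [x [Hx _]| |x y [Hx chix] [Hy chiy]|x [Hx chix]].
- exact: H_unit.
- by split; [exact: H1|exact: chi1].
- by split; [exact: HM|rewrite chiM // chix chiy mulr1].
- by split; [exact: HV|rewrite chiV // chix invr1].
Qed.

Lemma Ker_normal : normal_in Ker H.
Proof.
move=> h x Hh [Hx chix]; split; first exact: HM (HM Hh Hx) (HV Hh).
by rewrite (chiM (HM Hh Hx) (HV Hh)) (chiM Hh Hx) chix mulr1 chiV // mulfV ?chi_neq0.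
Qed.

Lemma Ker_open : open_in_G abs Ker.
Proof.
split=> [x [Hx _]|x [Hx chix]]; first exact: H_unit.
have [e e0 loc] := chi_locally_constant Hx; exists e => // y uy.
by rewrite alg_distE => /(loc y uy) [Hy chiy]; split; rewrite ?chiy.
Qed.

(* chi has values of odd order, so chi h ^+ 2 = 1 forces chi h = 1. *)
Lemma chi_eq1_of_sqr h : H h -> chi h ^+ 2 = 1 -> chi h = 1.
Proof.
move=> Hh sqr1.
have [M [oddM [_ chiM1]]] :=
  odd_power_in_open_normal Ker_subgroup (fun x (Kx : Ker x) => proj1 Kx) Ker_normal Ker_open Hh.
by move: chiM1; rewrite chiX // -(odd_double_half M) oddM -mul2n exprD exprM sqr1 expr1n mulr1.
Qed.

Section ConjugationBall.
Variable rho : R.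
Hypotheses (rho_gt0 : 0 < rho) (c_rho : Cst * rho <= 1).

Definition conj_ball y := H y /\
  forall h, H h -> Nm (h * y * h^-1 - 1) < rho /\ Nm (h * y^-1 * h^-1 - 1) < rho.

Lemma conj_ball_subgroup : is_subgroup conj_ball.
Proof.
split=> [x [Hx _]| |x y [Hx near_x] [Hy near_y]|x [Hx near_x]].
- exact: H_unit.
- split=> [|h Hh]; first exact: H1.
  by rewrite invr1 mulr1 divrr ?H_unit // subrr Nm0.
- split=> [|h Hh]; first exact: HM.
  have [x1 x2] := near_x h Hh; have [y1 y2] := near_y h Hh.
  have conjM u v : h * (u * v) * h^-1 = (h * u * h^-1) * (h * v * h^-1).
    by rewrite !mulrA mulrVK ?H_unit.
  by rewrite invrM ?H_unit // !conjM; split; apply: ball1_mul.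
- split=> [|h Hh]; first exact: HV.
  by have [x1 x2] := near_x h Hh; rewrite invrK.
Qed.

Lemma conj_ball_normal : normal_in conj_ball H.
Proof.
move=> k x Hk [Hx near_x]; split=> [|h Hh]; first exact: HM (HM Hk Hx) (HV Hk).
have uk := H_unit Hk; have ux := H_unit Hx; have uh := H_unit Hh.
have inv_conj : (k * x / k)^-1 = k * x^-1 / k.
  by rewrite invrM ?unitrMl ?unitrV // invrK invrM // mulrA.
have [n1 n2] := near_x (h * k) (HM Hh Hk).
rewrite invrM // !mulrA in n1 n2.
by rewrite inv_conj !mulrA; split.
Qed.

Lemma conj_ball_open : open_in_G abs conj_ball.
Proof.
split=> [x [Hx _]|y [Hy near_y]]; first exact: H_unit.
have [_ /(_ y Hy) [e1 e10 open_e1]] := H_open.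
have LL0 : 0 <= LH * LH by rewrite mulr_ge0 ?LH_ge0.
exists (Num.min e1 (rho / (LH * LH + 1))); first by rewrite lt_min e10 divr_gt0 //; lra.
move=> z uz; rewrite alg_distE lt_min => /andP [lt_e1 lt_rho].
have Hz : H z by apply: open_e1; rewrite // alg_distE.
have uy := H_unit Hy.
have small u v a b : H a -> H b -> Nm (u - v) < rho / (LH * LH + 1) ->
    Nm (a * (u - v) * b) < rho.
  move=> Ha Hb lt_uv; apply: le_lt_trans (NmHlr _ Ha Hb) _.
  by apply: mul_lt_of_lt_div; rewrite ?Nm_ge0.
split=> // h Hh; have [y1 y2] := near_y h Hh.
have shift u v : h * u * h^-1 - 1 = (h * v * h^-1 - 1) + h * (u - v) * h^-1.
  by rewrite [RHS]addrC mulrBr mulrBl addrA subrK.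
split; [rewrite (shift z y)|rewrite (shift z^-1 y^-1)]; apply: NmD_lt => //.
  by apply: small Hh (HV Hh) _; rewrite NmB.
have -> : z^-1 - y^-1 = z^-1 * (y - z) * y^-1.
  by rewrite mulrBr mulrBl mulrK // mulVr // mul1r.
have -> : h * (z^-1 * (y - z) * y^-1) * h^-1 = (h * z^-1) * (y - z) * (y^-1 * h^-1).
  by rewrite !mulrA.
by apply: small (HM Hh (HV Hz)) (HM (HV Hy) (HV Hh)) lt_rho.
Qed.

End ConjugationBall.

Lemma odd_power_near1 s (r : R) : H s -> 0 < r -> exists M, odd M /\ Nm (s ^+ M - 1) < r.
Proof.
move=> Hs r0; have [rho [rho0 rho_r] c_rho] := small_radius r0.
have [M [oddM [_ near_M]]] := odd_power_in_open_normal (conj_ball_subgroup rho0 c_rho)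
  (fun x (Bx : conj_ball rho x) => proj1 Bx) (@conj_ball_normal rho) (conj_ball_open rho0) Hs.
exists M; split=> //; have [near1 _] := near_M 1 H1.
by rewrite mul1r invr1 mulr1 in near1; apply: lt_le_trans rho_r.
Qed.

Lemma H_closed u : unit u -> ~ H u ->
  exists2 e : R, 0 < e & forall v, H v -> ~ Nm (u - v) < e.
Proof.
move=> uu notHu; have [_ /(_ 1 H1) [e1 e10 open_e1]] := H_open.
have LH1 : 0 < LH + 1 by have := LH_ge0; lra.
exists (e1 / (LH + 1)); first by rewrite divr_gt0.
move=> v Hv lt_uv; apply: notHu; have uv := H_unit Hv.
suff Hvu : H (v^-1 * u) by rewrite -[u](mulVKr uv); exact: HM.
apply: open_e1; first by rewrite unitrMl ?unitrV.
rewrite alg_distE -[X in X - _](mulVr uv) -mulrBr.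
apply: le_lt_trans (NmHl _ (HV Hv)) _.
by apply: mul_lt_of_lt_div; rewrite ?LH_ge0 ?Nm_ge0 // NmB.
Qed.

Section Involution.
Variable iota : A -> A.
Hypothesis iota_inv : cont_involution abs iota.

Lemma iota_unit x : unit x -> unit (iota x).
Proof. by case: iota_inv => iota_u _ _ _; apply: iota_u. Qed.

Lemma iotaM x y : unit x -> unit y -> iota (x * y) = iota x * iota y.
Proof. by case: iota_inv => _ iota_mul _ _; apply: iota_mul. Qed.

Lemma iotaK x : unit x -> iota (iota x) = x.
Proof. by case: iota_inv => _ _ iota_invol _; apply: iota_invol. Qed.

Lemma iota1 : iota 1 = 1.
Proof.
have u1 := unitr1 A; apply: (mulrI (iota_unit u1)).
by rewrite -iotaM // !mulr1.
Qed.

Lemma iotaV x : unit x -> iota x^-1 = (iota x)^-1.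
Proof.
move=> ux; apply: (mulrI (iota_unit ux)).
by rewrite -iotaM ?unitrV // !divrr ?iota_unit // iota1.
Qed.

Section Twisted.
Variable g : A.
Hypothesis g_unit : unit g.

(* The involution iota transported by conjugation by g.  Its fixed points in H are
   the g-conjugates of the points of H^g fixed by iota. *)
Definition tau y := g * iota (g^-1 * y * g) * g^-1.

Lemma conj_unit y : unit y -> unit (g^-1 * y * g).
Proof. by move=> uy; rewrite !unitrMl ?unitrV. Qed.

Lemma tau_unit y : unit y -> unit (tau y).
Proof. by move=> uy; rewrite !unitrMl ?unitrV ?iota_unit ?conj_unit. Qed.

Lemma tauM x y : unit x -> unit y -> tau (x * y) = tau x * tau y.
Proof.
move=> ux uy; rewrite /tau.
have -> : g^-1 * (x * y) * g = (g^-1 * x * g) * (g^-1 * y * g) by rewrite !mulrA mulrK.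
by rewrite iotaM ?conj_unit // !mulrA mulrVK.
Qed.

Lemma tauK y : unit y -> tau (tau y) = y.
Proof.
move=> uy; rewrite /tau.
have -> : g^-1 * (g * iota (g^-1 * y * g) * g^-1) * g = iota (g^-1 * y * g).
  by rewrite !mulrA mulVr // mul1r mulrVK.
by rewrite iotaK ?conj_unit // !mulrA mulrK // divrr // mul1r.
Qed.

Lemma tau1 : tau 1 = 1.
Proof. by rewrite /tau mulr1 mulVr // iota1 mulr1 divrr. Qed.

Lemma tauV y : unit y -> tau y^-1 = (tau y)^-1.
Proof.
move=> uy; apply: (mulrI (tau_unit uy)).
by rewrite -tauM ?unitrV // !divrr ?tau_unit // tau1.
Qed.

Lemma tauX y n : unit y -> tau (y ^+ n) = tau y ^+ n.
Proof.
move=> uy; elim: n => [|n ih]; first by rewrite !expr0 tau1.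
by rewrite !exprS tauM ?unitrX // ih.
Qed.

(* tau is continuous, since iota is and conjugation is Lipschitz. *)
Lemma tau_cont x : unit x -> forall e : R, 0 < e -> exists2 e' : R, 0 < e' &
  forall y, unit y -> Nm (x - y) < e' -> Nm (tau x - tau y) < e.
Proof.
move=> ux e e0.
pose L := Cst * Nm g * (Cst * Nm g^-1).
have L0 : 0 <= L by rewrite /L !mulr_ge0 ?Cst_ge0 ?Nm_ge0.
have conjB a b u v : a * u * b - a * v * b = a * (u - v) * b by rewrite mulrBr mulrBl.
case: iota_inv => _ _ _ /(_ _ (conj_unit ux) (e / (L + 1))) [|e1 e10 cont_e1].
  by rewrite divr_gt0 //; lra.
exists (e1 / (L + 1)); first by rewrite divr_gt0 //; lra.
move=> y uy lt_xy; rewrite conjB; apply: le_lt_trans (NmM3 _ _ _) _.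
apply: mul_lt_of_lt_div; rewrite ?Nm_ge0 //.
rewrite -alg_distE; apply: cont_e1; first exact: conj_unit.
rewrite alg_distE conjB; apply: le_lt_trans (NmM3 _ _ _) _.
by rewrite [_ * _ * (_ * _)]mulrC; apply: mul_lt_of_lt_div; rewrite ?Nm_ge0.
Qed.

Lemma displacement_locally_constant x : unit x -> tau x != x ->
  exists2 e : R, 0 < e &
    forall y, unit y -> Nm (x - y) < e -> Nm (tau y - y) = Nm (tau x - x).
Proof.
move=> ux tau_x; have d0 : 0 < Nm (tau x - x) by rewrite Nm_gt0 // subr_eq0.
have [e1 e10 cont_e1] := tau_cont ux d0.
exists (Num.min e1 (Nm (tau x - x))); first by rewrite lt_min e10.
move=> y uy; rewrite lt_min => /andP [lt_e1 lt_d].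
have -> : tau y - y = (tau x - x) + ((tau y - tau x) + (x - y)).
  by rewrite addrCA !addrA !addrNK.
by rewrite NmD_eq // NmD_lt // NmB cont_e1.
Qed.

Definition theta z := chi z * chi (tau z).

Definition level (c : complex R) z := [/\ H z, H (tau z) & theta z = c].

(* Each level set is closed in H, since H is closed in G and chi is locally constant. *)
Lemma level_closed c x : H x -> ~ level c x ->
  exists2 e : R, 0 < e & forall y, H y -> Nm (x - y) < e -> ~ level c y.
Proof.
move=> Hx not_level; have ux := H_unit Hx.
case: (classic (H (tau x))) => [H_tx|notH_tx].
  have [e1 e10 loc_x] := chi_locally_constant Hx.
  have [e2 e20 loc_tx] := chi_locally_constant H_tx.
  have [e3 e30 cont_e3] := tau_cont ux e20.
  exists (Num.min e1 e3); first by rewrite lt_min e10.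
  move=> y Hy; rewrite lt_min => /andP [lt_e1 lt_e3] [_ H_ty theta_y].
  have uy := H_unit Hy.
  have [_ chi_y] := loc_x y uy lt_e1.
  have [_ chi_ty] := loc_tx (tau y) (tau_unit uy) (cont_e3 y uy lt_e3).
  by apply: not_level; split=> //; rewrite -theta_y /theta chi_y chi_ty.
have [e2 e20 far_H] := H_closed (tau_unit ux) notH_tx.
have [e3 e30 cont_e3] := tau_cont ux e20.
exists e3 => // y Hy lt_e3 [_ H_ty _].
exact: far_H H_ty (cont_e3 y (H_unit Hy) lt_e3).
Qed.

Lemma level_displacement_gap c : (forall z, level c z -> tau z <> z) ->
  exists2 del : R, 0 < del & forall z, level c z -> del <= Nm (tau z - z).
Proof.
move=> no_fixed.
have [|del del0 gap] := compact_lower_bound (P := level c)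
  (f := fun z => Nm (tau z - z)) H_compact.
  move=> x Hx; case: (classic (level c x)) => [lvl_x|not_lvl].
    have tau_x : tau x != x by apply/eqP; exact: no_fixed.
    have [e e0 const] := displacement_locally_constant (H_unit Hx) tau_x.
    exists e, (Nm (tau x - x)); split=> //; first by rewrite Nm_gt0 // subr_eq0.
    by move=> y Hy _ lt_e; rewrite (const y (H_unit Hy) lt_e).
  have [e e0 far] := level_closed Hx not_lvl.
  by exists e, 1; split=> // y Hy lvl_y lt_e; case: (far y Hy lt_e).
by exists del => // z lvl_z; apply: gap => //; case: lvl_z.
Qed.

(* Every nonempty level set contains points moved arbitrarily little by tau:
   with s = h0 tau(h0)^-1, tau s = s^-1, s^M near 1 for M odd and r = s^((M+1)/2),
   z = r^-1 h0 has theta z = theta h0 and tau z - z = (s^M - 1) z. *)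
Lemma level_almost_fixed h0 (del : R) : H h0 -> H (tau h0) -> 0 < del ->
  exists z, level (theta h0) z /\ Nm (tau z - z) < del.
Proof.
move=> H_h0 H_th0 del0; have u_h0 := H_unit H_h0; have u_th0 := H_unit H_th0.
pose s := h0 * (tau h0)^-1.
have Hs : H s by apply: HM H_h0 (HV H_th0).
have us := H_unit Hs.
have LH1 : 0 < LH + 1 by have := LH_ge0; lra.
have [M [oddM near_M]] := odd_power_near1 Hs (divr_gt0 del0 LH1).
pose q := M./2; pose r := s ^+ q.+1; pose z := r^-1 * h0.
have eM : M = (q + q.+1)%N by rewrite /q -{1}(odd_double_half M) oddM addnS add1n -addnn.
have Hr : H r := HX _ Hs.
have ur := H_unit Hr.
have Hz : H z by apply: HM (HV Hr) H_h0.
have tau_s : tau s = s^-1 by rewrite tauM ?unitrV // tauV // tauK // invrM ?unitrV // invrK.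
have tau_z : tau z = r * tau h0.
  by rewrite tauM ?unitrV // tauV // tauX // tau_s -exprVn invrK.
exists z; split.
  split=> //; first by rewrite tau_z; apply: HM.
  rewrite /theta tau_z (chiM (HV Hr) H_h0) (chiM Hr H_th0) (chiV Hr).
  by rewrite -mulrA mulrCA mulKf ?chi_neq0.
have -> : tau z - z = (s ^+ M - 1) * z.
  have th0 : tau h0 = s^-1 * h0 by rewrite invrM ?unitrV // invrK mulrVK.
  rewrite mulrBl mul1r tau_z th0 /z /r eM exprD !mulrA exprSr mulrK //.
  by rewrite mulrK // unitrMl ?unitrX.
apply: le_lt_trans (NmHr _ Hz) _.
by apply: mul_lt_of_lt_div; rewrite ?LH_ge0 ?Nm_ge0.
Qed.

(* Otherwise the level set of some value would
   contain no fixed point, contradicting the two previous lemmas. *)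
Lemma theta_trivial : (forall z, H z -> tau z = z -> chi z = 1) ->
  forall h, H h -> H (tau h) -> theta h = 1.
Proof.
move=> fixed_triv h Hh H_th.
case: (classic (exists z, level (theta h) z /\ tau z = z)) => [[z [[Hz _ lvl] fix_z]]|].
  by rewrite -lvl /theta fix_z fixed_triv // mulr1.
move=> no_fixed; have [|del del0 gap] := @level_displacement_gap (theta h).
  by move=> z lvl_z fix_z; apply: no_fixed; exists z.
have [z [lvl_z near_z]] := level_almost_fixed Hh H_th del0.
by have := lt_le_trans near_z (gap z lvl_z); rewrite ltxx.
Qed.

(* Conversely, theta z = chi z ^+ 2 at a fixed point, and chi has odd order. *)
Lemma theta_trivial_iff : (forall z, H z -> tau z = z -> chi z = 1) <->
  (forall h, H h -> H (tau h) -> theta h = 1).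
Proof.
split=> [|theta_triv z Hz fix_z]; first exact: theta_trivial.
by apply: chi_eq1_of_sqr => //; rewrite expr2 -{2}fix_z -/(theta z) theta_triv // fix_z.
Qed.

(* Condition (a) of the theorem says exactly that chi is trivial on the fixed points
   of tau in H (substitute h = g x g^-1). *)
Lemma conj_fixed_iff :
  (forall x, conjset H g x -> iota x = x -> conjchar chi g x = 1) <->
  (forall z, H z -> tau z = z -> chi z = 1).
Proof.
have conjK x : g^-1 * (g * x * g^-1) * g = x by rewrite !mulrA mulVr // mul1r mulrVK.
have conjVK z : g * (g^-1 * z * g) * g^-1 = z by rewrite !mulrA mulrK // divrr // mul1r.
split=> [triv z Hz fix_z|triv x Hgx fix_x].
  rewrite -(conjVK z); apply: triv; first by rewrite /conjset conjVK.
  by rewrite -{2}fix_z /tau conjK.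
by apply: triv => //; rewrite /tau conjK fix_x.
Qed.

Section Intertwining.
Variable w : A.
Hypotheses (w_unit : unit w)
  (w_H : forall y, conjset H w y <-> exists2 x, H x & iota x = y)
  (w_chi : forall x, conjset H w x -> (chi (iota x))^-1 = conjchar chi w x).

(* Conjugating by w iota(g) g^-1 is conjugating by w after twisting by g. *)
Definition twist h := iota g * (g^-1 * h * g) * (iota g)^-1.

Lemma twist_conj h :
  (w * iota g * g^-1) * h * (w * iota g * g^-1)^-1 = w * twist h * w^-1.
Proof.
have uig := iota_unit g_unit.
have uwig : unit (w * iota g) by rewrite unitrMl.
by rewrite invrM ?unitrV // invrK invrM // /twist !mulrA.
Qed.

Lemma iota_twist h : unit h -> iota (twist h) = tau h.
Proof.
move=> uh; have uig := iota_unit g_unit.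
by rewrite /twist iotaM ?unitrMl ?conj_unit ?unitrV // iotaM ?conj_unit // iotaV // iotaK.
Qed.

Lemma intertwines_iff :
  intertwines H chi (w * iota g * g^-1) <-> (forall h, H h -> H (tau h) -> theta h = 1).
Proof.
have twist_in h : H h -> conjset H w (twist h) <-> H (tau h).
  move=> Hh; have uh := H_unit Hh.
  have u_twist : unit (twist h) by rewrite !unitrMl ?unitrV ?iota_unit ?conj_unit.
  rewrite w_H -iota_twist //; split=> [[x Hx <-]|H_th]; first by rewrite iotaK ?H_unit.
  by exists (iota (twist h)); rewrite ?iotaK.
have conj_twist h : conjchar chi (w * iota g * g^-1) h = conjchar chi w (twist h).
  by rewrite /conjchar twist_conj.
rewrite /intertwines /conjset.
split=> [intw h Hh H_th|theta_triv h Hh]; last first.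
  rewrite twist_conj => in_w; rewrite conj_twist -(w_chi in_w) iota_twist ?H_unit //.
  have H_th := (twist_in h Hh).1 in_w.
  by apply: (mulIf (chi_neq0 H_th)); rewrite mulVf ?chi_neq0 // -/(theta h) theta_triv.
have in_w := (twist_in h Hh).2 H_th.
have := intw h Hh; rewrite twist_conj conj_twist => /(_ in_w) chi_h.
by rewrite /theta chi_h -(w_chi in_w) iota_twist ?H_unit // mulVf ?chi_neq0.
Qed.

End Intertwining.
End Twisted.
End Involution.
End CompactOpenCharacter.
End UltrametricNorm.

Theorem lemma6p2 (R : realType) (F : fieldType) (abs : F -> R) (p : nat)
  (A : falgType F) (iota : A -> A) (H : A -> Prop) (chi : A -> complex R)
  (w : A) :
  prime p -> odd p -> nonarch_local_field abs p -> central_simple A ->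
  cont_involution abs iota ->
  prop_compact_open abs p H ->
  character abs H chi ->
  w \is a GRing.unit ->
  (forall y, conjset H w y <-> exists2 x, H x & iota x = y) ->
  (forall x, conjset H w x -> (chi (iota x))^-1 = conjchar chi w x) ->
  forall g : A, g \is a GRing.unit ->
    ((forall x, conjset H g x -> iota x = x -> conjchar chi g x = 1) <->
     intertwines H chi (w * iota g * g^-1)).
Proof.
move=> _ odd_p [[abs_eq0 abs_ge0] [absM abs_ultra] _ _ _] _ iota_inv H_prop chi_char
  w_unit w_H w_chi g g_unit.
have theta_iff := theta_trivial_iff abs_eq0 abs_ge0 absM abs_ultra odd_p H_prop
  chi_char iota_inv g_unit.
have intw_iff := intertwines_iff H_prop chi_char iota_inv g_unit w_unit w_H w_chi.
exact: iff_trans (conj_fixed_iff H chi iota g_unit) (iff_trans theta_iff (iff_sym intw_iff)).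
Qed.
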